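(* Let $(X,\|\cdot\|_X)$ be a Banach space, $\mathcal{K}\subset X$ compact, and $\gamma_n=C'n^\delta\lambda^n$ with fixed $\delta\in\mathbb{R}$, $\lambda>1$, $C'>0$. (i) If for some constants $c_1>0$, $\alpha>0$, $\beta\in\mathbb{R}$ we have $\varepsilon_n(\mathcal{K})_X>c_1\frac{(\log_2n)^\beta}{n^\alpha}$ for all $n\ge2$, then there exists $C>0$ such that $d_n^{\gamma_n}(\mathcal{K})_X\ge C\frac{(\log_2n)^\beta}{n^{2\alpha}}$ for all $n\ge2$. (ii) If for some constants $c_1>0$, $\alpha>0$ we have $\varepsilon_n(\mathcal{K})_X>c_1(\log_2n)^{-\alpha}$ for all $n\ge2$, then there exists $C>0$ such that $d_n^{\gamma_n}(\mathcal{K})_X\ge C(\log_2n)^{-\alpha}$ for all $n\ge2$.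
   Context: For $m\ge0$, the entropy number $\varepsilon_m(\mathcal{K})_X$ is the infimum of all $\varepsilon>0$ such that $\mathcal{K}$ is covered by $2^m$ closed balls of radius $\varepsilon$ with centers in $X$. For $k\ge1$ and a norm $\|\cdot\|_{Y_k}$ on $\mathbb{R}^k$ let $B_{Y_k}=\{y\in\mathbb{R}^k:\|y\|_{Y_k}\le1\}$; for $\gamma\ge0$, $d^\gamma(\mathcal{K},Y_k)_X=\inf_{\Phi}\sup_{f\in\mathcal{K}}\inf_{y\in B_{Y_k}}\|f-\Phi(y)\|_X$, the infimum over all maps $\Phi:B_{Y_k}\to X$ with $\|\Phi(y)-\Phi(y')\|_X\le\gamma\|y-y'\|_{Y_k}$; and the Lipschitz width is $d_n^\gamma(\mathcal{K})_X=\inf_{1\le k\le n}\inf_{\|\cdot\|_{Y_k}}d^\gamma(\mathcal{K},Y_k)_X$, the inner infimum over all norms on $\mathbb{R}^k$. *)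

From HB Require Import structures.
From mathcomp Require Import all_boot all_order all_algebra.
From mathcomp Require Import all_classical all_reals all_analysis.
Set Implicit Arguments. Unset Strict Implicit. Unset Printing Implicit Defensive.
Import Order.TTheory GRing.Theory Num.Theory.
Import numFieldNormedType.Exports.
Local Open Scope classical_set_scope.
Local Open Scope ring_scope.

Definition is_norm (R : realType) (k : nat) (N : 'rV[R]_k -> R) : Prop :=
  [/\ (forall y, 0 <= N y),
      (forall y, N y = 0 -> y = 0),
      (forall (a : R) y, N (a *: y) = `|a| * N y) &
      (forall y z, N (y + z) <= N y + N z)].

Definition entropy_number (R : realType) (X : normedModType R)
    (K : set X) (m : nat) : R :=
  inf [set eps : R | 0 < eps /\
        exists c : 'I_(2 ^ m) -> X,
          forall f, K f -> exists i, `|f - c i| <= eps].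

Definition unit_ball (R : realType) (k : nat) (N : 'rV[R]_k -> R) :
  set 'rV[R]_k := [set y | N y <= 1].

(* d^gamma(K, Y_k)_X: Phi is a map B_{Y_k} -> X (represented by a total
   function whose values outside the ball are irrelevant) that is
   gamma-Lipschitz on the ball. *)
Definition lip_width_fixed (R : realType) (X : normedModType R)
    (K : set X) (gamma : R) (k : nat) (N : 'rV[R]_k -> R) : R :=
  inf [set d : R | exists Phi : 'rV[R]_k -> X,
        (forall y y', unit_ball N y -> unit_ball N y' ->
            `|Phi y - Phi y'| <= gamma * N (y - y')) /\
        d = sup [set e : R | exists2 f, K f &
                   e = inf [set t : R | exists2 y, unit_ball N y &
                                          t = `|f - Phi y|]]].

Definition lip_width (R : realType) (X : normedModType R)
    (K : set X) (gamma : R) (n : nat) : R :=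
  inf [set d : R | exists k : nat, (1 <= k <= n)%N /\
        exists N : 'rV[R]_k -> R, is_norm N /\ d = lip_width_fixed K gamma N].

Definition log2 (R : realType) (x : R) : R := ln x / ln 2.

From HB Require Import structures.
From mathcomp Require Import all_boot all_order all_algebra perm.
From mathcomp Require Import all_classical all_reals all_analysis.
From mathcomp Require Import ring lra zify.
Import Order.TTheory GRing.Theory Num.Theory.
Import numFieldNormedType.Exports.
Local Open Scope classical_set_scope.
Local Open Scope ring_scope.

Set Implicit Arguments.
Unset Strict Implicit.
Unset Printing Implicit Defensive.

(* If d_n^gamma(K) < D, there are a norm N on R^k (k <= n) and a
   gamma-Lipschitz map Phi on its unit ball whose image is D-close to every
   f in K.  The unit ball has a basis of vectors in the ball in which every
   point of the ball has coordinates in [-2, 2] (a matrix of almost maximal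
   determinant); a dyadic grid in these coordinates gives a net of 2^(kp)
   points of radius 8k/2^p, and its image under Phi covers K by 2^(np) balls
   of radius D + 8 n gamma / 2^p.  With p = q n the error term decays like
   2^(-qn), which for a large fixed q beats gamma_n = C' n^delta lambda^n and
   the polynomial loss coming from the index m = q n^2, so d_n^gamma(K) is at
   least half of the assumed lower bound for eps_m(K).  Part (ii) is the case
   alpha = 0 of part (i). *)

Lemma mx_entry_le_norm (K : realDomainType) m n (M : 'M[K]_(m, n)) i j :
  `|M i j| <= `|M|.
Proof.
rewrite [leRHS]/Num.norm /= mx_normrE.
exact: (le_bigmax _ (fun ij : 'I_m * 'I_n => `|M ij.1 ij.2|) (i, j)).
Qed.

Section NormOnRows.
Variables (R : realType) (k : nat) (N : 'rV[R]_k -> R).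
Hypothesis normN : is_norm N.

Lemma is_norm_ge0 y : 0 <= N y.
Proof. by have [+ _ _ _] := normN; apply. Qed.

Lemma is_norm_eq0 y : N y = 0 -> y = 0.
Proof. by have [_ + _ _] := normN; apply. Qed.

Lemma is_normZ a y : N (a *: y) = `|a| * N y.
Proof. by have [_ _ + _] := normN; apply. Qed.

Lemma is_normD y z : N (y + z) <= N y + N z.
Proof. by have [_ _ _ +] := normN; apply. Qed.

Lemma is_norm0 : N 0 = 0.
Proof. by rewrite -(scale0r 0) is_normZ normr0 mul0r. Qed.

Lemma is_normN y : N (- y) = N y.
Proof. by rewrite -scaleN1r is_normZ normrN normr1 mul1r. Qed.

Lemma is_norm_lerB_dist y z : N y - N z <= N (y - z).
Proof. by rewrite lerBlDr (le_trans _ (is_normD _ _)) // subrK. Qed.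

Lemma is_norm_ler_dist_dist y z : `|N y - N z| <= N (y - z).
Proof.
rewrite ler_norml is_norm_lerB_dist andbT lerNl opprB.
by rewrite -[N (y - z)]is_normN opprB is_norm_lerB_dist.
Qed.

Lemma is_norm_sum (I : finType) (F : I -> 'rV[R]_k) :
  N (\sum_i F i) <= \sum_i N (F i).
Proof.
elim/big_ind2: _ => [|y1 y2 z1 z2 le1 le2|//]; first by rewrite is_norm0.
exact: le_trans (is_normD _ _) (lerD le1 le2).
Qed.

Lemma is_norm_mulmx_le (c : 'rV[R]_k) (M : 'M[R]_k) :
  N (c *m M) <= \sum_i `|c 0 i| * N (row i M).
Proof.
rewrite mulmx_sum_row; apply: le_trans (is_norm_sum _) _.
by apply: ler_sum => i _; rewrite is_normZ.
Qed.

Lemma is_norm_le_mx_norm y : N y <= `|y| * \sum_i N 'e_i.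
Proof.
rewrite -[y]mulmx1 mulr_sumr; apply: le_trans (is_norm_mulmx_le _ _) _.
apply: ler_sum => i _; rewrite row1 ler_wpM2r ?is_norm_ge0 //.
by rewrite mulmx1 mx_entry_le_norm.
Qed.

Lemma is_norm_continuous : continuous N.
Proof.
move=> x; have nbhs_proper : ProperFilter (nbhs x) by exact: nbhs_pfilter.
apply/cvgrPdist_le => e e0.
pose S := \sum_i N ('e_i : 'rV[R]_k).
have S0 : 0 < S + 1 by rewrite ltr_wpDl // sumr_ge0 // => i _; exact: is_norm_ge0.
near=> y.
apply: le_trans (is_norm_ler_dist_dist x y) (le_trans (is_norm_le_mx_norm _) _).
have : `|x - y| <= e / (S + 1).
  by near: y; apply: cvgr_dist_le; [exact: cvg_id | rewrite divr_gt0].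
rewrite ler_pdivlMr // => /(le_trans _); apply.
by rewrite ler_wpM2l ?normr_ge0 // lerDl.
Unshelve. all: by end_near. Qed.

Lemma is_norm_ge_mx_norm : exists2 a, 0 < a & forall y, a * `|y| <= N y.
Proof.
have homogeneous a : (forall u, `|u| = 1 -> a <= N u) -> forall y, a * `|y| <= N y.
  move=> ha y; have [->|y0] := eqVneq y 0; first by rewrite normr0 mulr0 is_norm0.
  have ny : 0 < `|y| by rewrite normr_gt0.
  have -> : N y = N (`|y|^-1 *: y) * `|y|.
    by rewrite is_normZ normfV normr_id mulrAC mulVf ?mul1r ?gt_eqF.
  by rewrite ler_wpM2r ?(ltW ny) // ha // normrZ normfV normr_id mulVf ?gt_eqF.
pose S := [set u : 'rV[R]_k | `|u| = 1].
have [[u0 Su0]|S0] := pselect (S !=set0); last first.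
  by exists 1 => //; apply: homogeneous => u Su; case: S0; exists u.
have cS : compact S.
  apply: bounded_closed_compact; first by exists 1; split => // M M1 u /= ->; exact: ltW.
  exact: (proj1 (continuous_closedP _) (@norm_continuous _ _) _ (@closed_eq R 1)).
have [|c Sc minc] := @compact_EVT_min _ _ N _ (ex_intro _ u0 Su0) cS.
  exact: continuous_subspaceT is_norm_continuous.
rewrite inE in Sc; exists (N c); last by apply: homogeneous => u Su; apply: minc; rewrite inE.
rewrite lt_neqAle is_norm_ge0 andbT; apply/eqP => /esym /is_norm_eq0 c0.
by move: Sc; rewrite c0 normr0 => /esym/eqP; rewrite oner_eq0.
Qed.

End NormOnRows.

Lemma det_le_entries (K : numDomainType) k (M : 'M[K]_k) b :
  (forall i j, `|M i j| <= b) -> `|\det M| <= k`!%:R * b ^+ k.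
Proof.
move=> Mb; apply: le_trans (ler_norm_sum _ _ _) _.
rewrite mulr_natl -card_Sn -sumr_const; apply: ler_sum => s _.
rewrite normrM normrX normrN normr1 expr1n mul1r normr_prod.
rewrite -[k in b ^+ k]card_ord -prodr_const.
by apply: ler_prod => i _; rewrite normr_ge0 Mb.
Qed.

Lemma cramer_row (K : comUnitRingType) k (M : 'M[K]_k) (y : 'rV[K]_k) i :
  M \in unitmx ->
  \det (\matrix_(r, j) if r == i then y 0 j else M r j) = \det M * (y *m invmx M) 0 i.
Proof.
move=> unitM.
have -> : \det M * (y *m invmx M) 0 i = (y *m invmx M *m M *m \adj M) 0 i.
  by rewrite -mulmxA mul_mx_adj mul_mx_scalar [RHS]mxE.
rewrite mulmxKV // mxE (expand_det_row _ i); apply: eq_bigr => j _.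
rewrite !mxE eqxx; congr (_ * _); rewrite /cofactor; congr (_ * \det _).
by apply/matrixP => r s; rewrite !mxE eq_sym (negbTE (neq_lift i r)).
Qed.

Lemma near_auerbach_basis (R : realType) k (N : 'rV[R]_k -> R) : is_norm N ->
  exists M : 'M[R]_k, (forall i, N (row i M) <= 1) /\
    forall y, N y <= 1 -> exists2 c : 'rV[R]_k, y = c *m M & forall i, `|c 0 i| <= 2.
Proof.
move=> normN; have [a a0 aN] := is_norm_ge_mx_norm normN.
(* Take M of almost maximal |det| among the matrices with rows in the unit
   ball; by Cramer's rule, replacing row i of M by y multiplies det M by the
   i-th coordinate of y in the basis M. *)
pose adm := [set M : 'M[R]_k | forall i, N (row i M) <= 1].
pose D := [set `|\det M| | M in adm].
have adm_entries M i j : adm M -> `|M i j| <= a^-1.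
  move=> /(_ i) Mi; have -> : M i j = row i M 0 j by rewrite mxE.
  rewrite -(ler_pM2l a0) mulfV ?gt_eqF // (le_trans _ (le_trans (aN _) Mi)) //.
  by rewrite ler_wpM2l ?(ltW a0) ?mx_entry_le_norm.
have D_sup : has_sup D.
  split; first by exists `|\det (0 : 'M[R]_k)|, 0 => // i; rewrite row0 is_norm0.
  exists (k`!%:R * a^-1 ^+ k) => _ [M admM <-].
  by apply: det_le_entries => i j; exact: adm_entries.
have D_pos : 0 < sup D.
  have e_pos i : 0 < N 'e_i.
    rewrite lt_neqAle is_norm_ge0 // andbT; apply/eqP => /esym /(is_norm_eq0 normN).
    by move/matrixP/(_ 0 i); rewrite !mxE !eqxx => /eqP; rewrite oner_eq0.
  pose E := diag_mx (\row_i (N 'e_i)^-1).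
  have admE : adm E.
    move=> i; rewrite row_diag_mx (is_normZ normN) mxE.
    by rewrite ger0_norm ?invr_ge0 ?(ltW (e_pos i)) // mulVf ?gt_eqF.
  apply: lt_le_trans (sup_upper_bound D_sup (ex_intro2 _ _ E admE erefl)).
  rewrite det_diag normr_gt0 prodf_seq_neq0; apply/allP => i _ /=.
  by rewrite mxE invr_eq0 gt_eqF.
have [_ [M admM <-]] := sup_adherent (divr_gt0 D_pos (ltr0n R 2)) D_sup.
rewrite {1}(splitr (sup D)) addrK ltr_pdivrMr // mulrC => D_lt.
have detM_pos : 0 < `|\det M| by rewrite -(pmulr_rgt0 _ (ltr0n R 2)) (lt_trans D_pos).
have unitM : M \in unitmx by rewrite unitmxE unitfE -normr_gt0.
exists M; split => // y Ny; exists (y *m invmx M); first by rewrite mulmxKV.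
move=> i; pose M' := \matrix_(r, j) if r == i then y 0 j else M r j.
have admM' : adm M'.
  move=> r; have [-> | ri] := eqVneq r i.
    by have -> : row i M' = y by apply/rowP => j; rewrite !mxE eqxx.
  by have -> : row r M' = row r M by apply/rowP => j; rewrite !mxE (negbTE ri).
have := sup_upper_bound D_sup (ex_intro2 _ _ M' admM' erefl).
rewrite cramer_row // normrM mulrC => /le_lt_trans /(_ D_lt).
by rewrite ltr_pM2r // => /ltW.
Qed.


Lemma dyadic_approx (R : realType) (x : R) p : 0 <= x <= 1 ->
  exists t : 'I_(2 ^ p), `|x - t%:R / 2 ^+ p| <= (2 ^+ p)^-1.
Proof.
move=> /andP[x0 x1]; have P0 : (0 : R) < 2 ^+ p by rewrite exprn_gt0.
pose y := x * 2 ^+ p; pose t := minn (Num.truncn y) (2 ^ p).-1.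
have y0 : 0 <= y by apply: mulr_ge0 x0 (ltW P0).
have t_lt : (t < 2 ^ p)%N by rewrite (leq_ltn_trans (geq_minr _ _)) // prednK ?expn_gt0.
exists (Ordinal t_lt) => /=.
have -> : x - t%:R / 2 ^+ p = (y - t%:R) / 2 ^+ p by rewrite /y; field; exact: lt0r_neq0.
rewrite normrM normfV (gtr0_norm P0) ler_pdivrMr // mulVf ?gt_eqF //.
have [t_le_y y_lt] := andP (truncn_itv y0).
have y_le : y <= t%:R + 1.
  rewrite /t; case: leqP => _; first by rewrite natr1 ltW.
  by rewrite natr1 prednK ?expn_gt0 // natrX /y ler_piMl // ltW.
have t_le : t%:R <= y by apply: le_trans t_le_y; rewrite ler_nat geq_minl.
by rewrite ler_norml; apply/andP; split; lra.
Qed.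

Lemma unit_ball_net (R : realType) k (N : 'rV[R]_k -> R) p : is_norm N ->
  exists z : {ffun 'I_k -> 'I_(2 ^ p)} -> 'rV[R]_k,
    (forall t, unit_ball N (z t)) /\
    forall y, unit_ball N y -> exists t, N (y - z t) <= 8 * k%:R / 2 ^+ p.
Proof.
move=> normN; have [M [rowM coefM]] := near_auerbach_basis normN.
pose g (t : {ffun 'I_k -> 'I_(2 ^ p)}) := (\row_i (4 * ((t i)%:R / 2 ^+ p) - 2)) *m M.
pose r : R := 4 * k%:R / 2 ^+ p.
have near_grid y : unit_ball N y -> exists t, N (y - g t) <= r.
  move=> /coefM [c -> c_le2].
  have /choice [u hu] : forall i, exists t : 'I_(2 ^ p),
      `|(c 0 i + 2) / 4 - t%:R / 2 ^+ p| <= (2 ^+ p)^-1.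
    move=> i; apply: dyadic_approx.
    by move: (c_le2 i); rewrite ler_norml => /andP[? ?]; apply/andP; split; lra.
  exists [ffun i => u i]; rewrite -mulmxBl.
  apply: le_trans (is_norm_mulmx_le normN _ _) _.
  have -> : r = \sum_(i < k) (4 / 2 ^+ p : R).
    by rewrite /r sumr_const card_ord mulrAC mulr_natr.
  apply: ler_sum => i _; rewrite -[leRHS]mulr1 ler_pM ?normr_ge0 ?is_norm_ge0 //.
  rewrite !mxE ffunE.
  have -> : c 0 i - (4 * ((u i)%:R / 2 ^+ p) - 2)
      = 4 * ((c 0 i + 2) / 4 - (u i)%:R / 2 ^+ p) by field.
  by rewrite normrM ger0_norm // ler_pM2l.
(* xget falls back to 0, which also lies in the unit ball. *)
pose z t := xget 0 [set y' | unit_ball N y' /\ N (y' - g t) <= r].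
exists z; split => [t | y By].
  by rewrite /z; case: xgetP => [y' _ [] | _] //; rewrite /unit_ball /= is_norm0.
have [t gt] := near_grid y By; exists t.
have [_ zt] : unit_ball N (z t) /\ N (z t - g t) <= r.
  by apply: (xgetPex 0 (P := [set y' | unit_ball N y' /\ N (y' - g t) <= r])); exists y.
have -> : y - z t = (y - g t) + - (z t - g t) by rewrite opprB addrA subrK.
apply: le_trans (is_normD normN _ _) _; rewrite is_normN //.
have -> : 8 * k%:R / 2 ^+ p = r + r by rewrite /r; field; rewrite expf_neq0.
exact: lerD.
Qed.


Section CoveringByLipschitzImages.
Variables (R : realType) (X : normedModType R) (K : set X).

Lemma entropy_number_le (I : finType) (c : I -> X) m eps :
  0 < eps -> (#|I| <= 2 ^ m)%N -> (forall f, K f -> exists i, `|f - c i| <= eps) ->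
  entropy_number K m <= eps.
Proof.
move=> eps0 cardI cover; apply: ge_inf; first by exists 0 => e [e0 _]; exact: ltW.
split => //; exists (fun j => oapp (c \o enum_val) 0 (insub (val j) : option 'I_#|I|)).
move=> f /cover [i fi]; exists (widen_ord cardI (enum_rank i)).
by rewrite /= valK /= enum_rankK.
Qed.

Lemma lip_width_fixed_lt gam k (N : 'rV[R]_k -> R) D :
  bounded_set K -> 0 <= gam -> is_norm N -> lip_width_fixed K gam N < D ->
  exists Phi : 'rV[R]_k -> X,
    (forall y y', unit_ball N y -> unit_ball N y' -> `|Phi y - Phi y'| <= gam * N (y - y'))
    /\ forall f, K f -> exists2 y, unit_ball N y & `|f - Phi y| < D.
Proof.
move=> [B [_ KB]] gam0 normN; rewrite /lip_width_fixed => /inf_lt [].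
  exists (sup [set e | exists2 f, K f & e = inf [set t | exists2 y, unit_ball N y &
                                                  t = `|f - (fun=> 0 : X) y|]]).
  exists (fun=> 0); split => // y y' _ _.
  by rewrite subrr normr0 mulr_ge0 ?is_norm_ge0.
move=> _ [Phi [lipPhi ->]] sup_lt; exists Phi; split => // f Kf.
pose dist g := [set t | exists2 y, unit_ball N y & t = `|g - Phi y|].
have ball0 : unit_ball N 0 by rewrite /unit_ball /= is_norm0.
have dist_lb g : has_lbound (dist g) by exists 0 => _ [y _ ->].
have dist_le g : inf (dist g) <= `|g - Phi 0| by apply: ge_inf; last by exists 0.
have dists_sup : has_sup [set e | exists2 g, K g & e = inf (dist g)].
  split; first by exists (inf (dist f)), f.
  exists (B + 1 + `|Phi 0|) => _ [g Kg ->]; apply: le_trans (dist_le g) _.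
  by apply: le_trans (ler_normB _ _) _; rewrite lerD2r KB // ltrDl.
have /inf_lt [] := le_lt_trans (sup_upper_bound dists_sup (ex_intro2 _ _ f Kf erefl)) sup_lt.
  by exists `|f - Phi 0|, 0.
by move=> _ [y By ->]; exists y.
Qed.

Lemma lip_width_lt gam n D :
  bounded_set K -> 0 <= gam -> (0 < n)%N -> lip_width K gam n < D ->
  exists k (N : 'rV[R]_k -> R) (Phi : 'rV[R]_k -> X), [/\ (k <= n)%N, is_norm N,
    (forall y y', unit_ball N y -> unit_ball N y' -> `|Phi y - Phi y'| <= gam * N (y - y'))
    & forall f, K f -> exists2 y, unit_ball N y & `|f - Phi y| < D].
Proof.
move=> bK gam0 n0 /inf_lt [].
  exists (lip_width_fixed K gam (fun y : 'rV[R]_1 => `|y|)), 1%N; split => //.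
  exists (fun y : 'rV[R]_1 => `|y|); split => //.
  by split; [exact: normr_ge0 | exact: normr0_eq0 | exact: normrZ | exact: ler_normD].
move=> _ [k [/andP[_ kn] [N [normN ->]]]] /(lip_width_fixed_lt bK gam0 normN).
by move=> [Phi [lipPhi cover]]; exists k, N, Phi.
Qed.

Lemma entropy_number_le_lip_width gam n p D :
  bounded_set K -> 0 <= gam -> (0 < n)%N -> lip_width K gam n < D -> 0 < D ->
  entropy_number K (n * p) <= D + 8 * n%:R * gam / 2 ^+ p.
Proof.
move=> bK gam0 n0 /(lip_width_lt bK gam0 n0) [k [N [Phi [kn normN lipPhi cover]]]] D0.
have P0 : (0 : R) < 2 ^+ p by rewrite exprn_gt0.
have [z [zB znet]] := unit_ball_net p normN.
apply: (entropy_number_le (c := Phi \o z)).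
- by apply: (lt_le_trans D0); rewrite lerDl divr_ge0 ?(ltW P0) // !mulr_ge0.
- by rewrite card_ffun !card_ord -expnM leq_pexp2l // mulnC leq_mul2r kn orbT.
move=> f /cover [y By fy]; have [t yzt] := znet y By; exists t => /=.
apply: le_trans (ler_distD (Phi y) _ _) _; apply: lerD; first exact: ltW.
apply: le_trans (lipPhi _ _ By (zB t)) _.
have -> : 8 * n%:R * gam / 2 ^+ p = gam * (8 * n%:R / 2 ^+ p) by ring.
apply: le_trans (ler_wpM2l gam0 yzt) _.
by rewrite ler_wpM2l // ler_wpM2r ?invr_ge0 ?(ltW P0) // ler_wpM2l // ler_nat.
Qed.

Lemma lip_width_ge_of_entropy gam n p T :
  bounded_set K -> 0 <= gam -> (0 < n)%N -> 0 < T -> T < entropy_number K (n * p) ->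
  8 * n%:R * gam / 2 ^+ p <= T / 2 -> T / 2 <= lip_width K gam n.
Proof.
move=> bK gam0 n0 T0 T_lt err_le; rewrite leNgt; apply/negP.
move=> /(entropy_number_le_lip_width p bK gam0 n0) /(_ (divr_gt0 T0 (ltr0n R 2))).
by lra.
Qed.

End CoveringByLipschitzImages.


Section Asymptotics.
Variable R : realType.

Lemma ln2_gt0 : 0 < ln (2 : R).
Proof. by rewrite ln_gt0 // ltr1n. Qed.

Lemma log2M (x y : R) : 0 < x -> 0 < y -> log2 (x * y) = log2 x + log2 y.
Proof. by move=> x0 y0; rewrite /log2 lnM ?posrE // mulrDl. Qed.

Lemma log2_ge0 (x : R) : 1 <= x -> 0 <= log2 x.
Proof. by move=> x1; rewrite /log2 divr_ge0 ?ln_ge0 // ler1n. Qed.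

Lemma log2_ge1 (x : R) : 2 <= x -> 1 <= log2 x.
Proof.
move=> x2; rewrite /log2 ler_pdivlMr ?ln2_gt0 // mul1r ler_ln ?posrE //.
exact: lt_le_trans x2.
Qed.

Lemma log2_nat_le n : (0 < n)%N -> log2 (n%:R : R) <= n%:R.
Proof.
move=> n0; rewrite /log2 ler_pdivrMr ?ln2_gt0 // mulr_natl -lnXn //.
by rewrite ler_ln ?posrE ?exprn_gt0 ?ltr0n // -natrX ler_nat ltnW // ltn_expl.
Qed.

Lemma ler_powRN (x y e : R) : 0 < x -> x <= y -> 0 <= e -> y `^ (- e) <= x `^ (- e).
Proof.
move=> x0 xy e0; have y0 := lt_le_trans x0 xy.
rewrite !powRN ler_pV2 ?inE /= ?unitfE ?gt_eqF ?powR_gt0 //.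
by apply: ge0_ler_powR => //; rewrite nnegrE ltW.
Qed.

Lemma powR_ge1 (x e : R) : 1 <= x -> 0 <= e -> 1 <= x `^ e.
Proof. by move=> x1 e0; rewrite -(powRr0 x) ler_powR. Qed.

Lemma powRN_le1 (x e : R) : 1 <= x -> 0 <= e -> x `^ (- e) <= 1.
Proof.
move=> x1 e0; have xe1 := powR_ge1 x1 e0.
by rewrite powRN invf_le1 // (lt_le_trans ltr01).
Qed.

Lemma powRNnorm_le_powR (x y e : R) : 1 <= x -> x <= y -> y `^ (- `|e|) <= x `^ e.
Proof.
move=> x1 xy; have [e0 | e0] := leP 0 e.
  by rewrite ger0_norm // (le_trans (powRN_le1 (le_trans x1 xy) e0)) ?powR_ge1.
rewrite ltr0_norm // opprK -[e]opprK; apply: ler_powRN xy _.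
  exact: lt_le_trans ltr01 x1.
by rewrite oppr_ge0 ltW.
Qed.

Lemma powR_ge_scaled (a b L e : R) : 1 <= a -> a <= b -> b <= L * a -> 1 <= L ->
  L `^ (- `|e|) * a `^ e <= b `^ e.
Proof.
move=> a1 ab bLa L1; have a0 : 0 < a by exact: lt_le_trans ltr01 a1.
have [e0 | e0] := leP 0 e.
  have ae_le : a `^ e <= b `^ e.
    by apply: ge0_ler_powR => //; rewrite nnegrE ltW // (lt_le_trans a0).
  by rewrite ger0_norm // (le_trans _ ae_le) // ler_piMl ?powR_ge0 ?powRN_le1.
rewrite ltr0_norm // opprK -powRM ?(le_trans ler01) ?(ltW a0) //.
rewrite -[e]opprK; apply: ler_powRN bLa _; last by rewrite oppr_ge0 ltW.
exact: lt_le_trans a0 ab.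
Qed.

Lemma ln_le_linear (x eps : R) : 0 < x -> 0 < eps -> ln x <= eps * x - ln eps.
Proof.
move=> x0 eps0; have := ln_sublinear (mulr_gt0 eps0 x0).
by rewrite lnM ?posrE // => ?; lra.
Qed.

Lemma exists_nat_linear_ge_ln (u s : R) : 0 <= s ->
  exists2 q : nat, (0 < q)%N & s * ln q%:R + u <= q%:R * ln 2.
Proof.
move=> s0; have l2 := ln2_gt0.
pose eps := ln 2 / (2 * (s + 1)); pose v := u - s * ln eps.
have s1 : 0 < s + 1 by rewrite ltr_wpDl.
have eps0 : 0 < eps by rewrite divr_gt0 // mulr_gt0.
have s_eps : s * eps <= ln 2 / 2.
  have -> : s * eps = ln 2 / 2 * (s / (s + 1)) by rewrite /eps; field; exact: lt0r_neq0.
  by rewrite ler_piMr ?divr_ge0 ?(ltW l2) ?(ltW s1) // ler_pdivrMr // mul1r lerDl.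
pose q := (Num.truncn (2 * `|v| / ln 2)).+1.
have q_big : `|v| < q%:R * ln 2 / 2.
  by have := truncnS_gt (2 * `|v| / ln 2); rewrite -/q ltr_pdivrMr // => ?; lra.
exists q => //.
have lnq := ler_wpM2l s0 (ln_le_linear (ltr0n R q) eps0).
have := ler_wpM2l (ler0n R q) s_eps.
have := ler_norm v; rewrite /v in q_big * => *; lra.
Qed.

Lemma exists_exp2_dominating (a b s lam : R) : 0 < a -> 0 < lam -> 0 <= s ->
  exists2 q : nat, (0 < q)%N & forall n : nat, (0 < n)%N ->
    a * n%:R `^ b * lam ^+ n / 2 ^+ (q * n) <= (q * n ^ 2)%:R `^ (- s).
Proof.
move=> a0 lam0 s0.
have [q q0 hq] := exists_nat_linear_ge_ln (`|ln a| + `|b + 2 * s| + `|ln lam|) s0.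
exists q => // n n0; have [n0' q0'] : (0 : R) < n%:R /\ (0 : R) < q%:R by rewrite !ltr0n.
have n1 : (1 : R) <= n%:R by rewrite ler1n.
have two0 : (0 : R) < 2 by [].
have nb0 := powR_gt0 b n0'; have lamn0 := exprn_gt0 n lam0.
have an0 := mulr_gt0 a0 nb0; have anl0 := mulr_gt0 an0 lamn0.
have twoqn0 := exprn_gt0 (q * n) two0; have nn0 := exprn_gt0 2 n0'.
rewrite -ler_ln ?posrE ?divr_gt0 ?powR_gt0 ?natrM ?natrX ?mulr_gt0 //.
rewrite ln_div ?posrE // !lnM ?posrE // !ln_powR lnXn // !lnM ?posrE // lnXn //.
rewrite -[ln lam *+ n]mulr_natl -[ln 2 *+ _]mulr_natl natrM.
have lnn_le : ln (n%:R : R) <= n%:R by rewrite ltW ?ln_sublinear.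
have lnq0 : 0 <= ln (q%:R : R) by rewrite ln_ge0 // ler1n.
(* After taking logarithms, the left-hand side is at most n times the
   left-hand side of hq. *)
have := ler_wpM2l (ltW n0') hq.
have := ler_wpM2r (mulr_ge0 s0 lnq0) n1.
have := ler_peMl (normr_ge0 (ln a)) n1; have := ler_norm (ln a).
have := ler_wpM2l (ltW n0') (ler_norm (ln lam)).
have := ler_wpM2l (normr_ge0 (b + 2 * s)) lnn_le.
have := ler_wpM2r (ln_ge0 n1) (ler_norm (b + 2 * s)).
move=> *; lra.
Qed.

Lemma powRN_le_log2_ratio (alpha beta : R) m : (2 <= m)%N ->
  m%:R `^ (- (alpha + `|beta|)) <= log2 (m%:R : R) `^ beta / m%:R `^ alpha.
Proof.
move=> m2; have m0 : (0 : R) < m%:R by rewrite ltr0n (leq_trans _ m2).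
rewrite opprD addrC powRD ?(lt0r_neq0 m0) ?implybT // ler_pdivlMr ?powR_gt0 //.
rewrite -mulrA -powRD ?(lt0r_neq0 m0) ?implybT // addNr powRr0 mulr1.
apply: powRNnorm_le_powR; first by rewrite log2_ge1 // ler_nat.
exact: log2_nat_le (ltnW m2).
Qed.

Lemma log2_ratio_scaled (alpha beta : R) q n : (0 < q)%N -> (2 <= n)%N ->
  (log2 q%:R + 2) `^ (- `|beta|) / q%:R `^ alpha * (log2 n%:R `^ beta / n%:R `^ (2 * alpha))
    <= log2 (q * n ^ 2)%:R `^ beta / (q * n ^ 2)%:R `^ alpha.
Proof.
move=> q0 n2; have [q0' n0'] : (0 : R) < q%:R /\ (0 : R) < n%:R by rewrite !ltr0n (ltnW n2).
have Lq0 : 0 <= log2 (q%:R : R) by rewrite log2_ge0 ?ler1n.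
have Ln1 : 1 <= log2 (n%:R : R) by rewrite log2_ge1 ?ler_nat.
have Lm : log2 ((q * n ^ 2)%:R : R) = log2 q%:R + 2 * log2 n%:R.
  by rewrite natrM natrX expr2 !log2M ?mulr_gt0 // -mulr2n mulr_natl.
have -> : (q * n ^ 2)%:R `^ alpha = q%:R `^ alpha * n%:R `^ (2 * alpha) :> R.
  by rewrite natrM natrX powRM ?ler0n ?exprn_ge0 // powRrM -powR_mulrn ?ler0n.
have qa0 := powR_gt0 alpha q0'; have na0 := powR_gt0 (2 * alpha) n0'.
set A := (log2 q%:R + 2) `^ _; set Lnb := log2 n%:R `^ beta.
have -> : A / q%:R `^ alpha * (Lnb / n%:R `^ (2 * alpha))
    = A * Lnb / (q%:R `^ alpha * n%:R `^ (2 * alpha)).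
  by field; rewrite !gt_eqF.
rewrite ler_wpM2r ?invr_ge0 ?mulr_ge0 ?powR_ge0 // Lm /A /Lnb.

have LqLn : log2 (q%:R : R) <= log2 q%:R * log2 n%:R by rewrite ler_peMr.
by apply: powR_ge_scaled; lra.
Qed.

End Asymptotics.


Lemma lip_width_lower_bound (R : realType) (X : normedModType R) (K : set X)
    (delta lambda C' c1 alpha beta : R) :
  bounded_set K -> 1 < lambda -> 0 < C' -> 0 < c1 -> 0 <= alpha ->
  (forall n : nat, (2 <= n)%N ->
     entropy_number K n > c1 * (log2 n%:R `^ beta) / (n%:R `^ alpha)) ->
  exists2 C : R, 0 < C & forall n : nat, (2 <= n)%N ->
    lip_width K (C' * (n%:R `^ delta) * lambda ^+ n) n
      >= C * (log2 n%:R `^ beta) / (n%:R `^ (2 * alpha)).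
Proof.
move=> bK lambda1 C'0 c10 alpha0 entropy_gt.
have lambda0 : 0 < lambda := lt_trans ltr01 lambda1.
have s0 : 0 <= alpha + `|beta| by rewrite addr_ge0.
have a0 : 0 < 16 * C' / c1 by rewrite divr_gt0 ?mulr_gt0.
have [q q0 dom] := exists_exp2_dominating (1 + delta) a0 lambda0 s0.
have Lq0 : 0 <= log2 (q%:R : R) by rewrite log2_ge0 ?ler1n.
exists (c1 / 2 * ((log2 q%:R + 2) `^ (- `|beta|) / q%:R `^ alpha)).
  by rewrite !mulr_gt0 ?invr_gt0 ?powR_gt0 ?ltr0n // ltr_wpDl.
move=> n n2; have n0 := ltnW n2; have n0' : (0 : R) < n%:R by rewrite ltr0n.
pose m := (q * n ^ 2)%N.
have m2 : (2 <= m)%N by rewrite /m; nia.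
have m0 : (0 : R) < m%:R by rewrite ltr0n (leq_trans _ m2).
pose T := c1 * (log2 m%:R `^ beta) / (m%:R `^ alpha).
have T0 : 0 < T.
  by rewrite divr_gt0 ?mulr_gt0 ?powR_gt0 // (lt_le_trans ltr01) ?log2_ge1 ?ler_nat.
have T_half : T / 2 = c1 / 2 * (log2 m%:R `^ beta / m%:R `^ alpha) by rewrite /T; ring.
pose gam := C' * n%:R `^ delta * lambda ^+ n.
have gam0 : 0 <= gam by rewrite !mulr_ge0 ?powR_ge0 ?exprn_ge0 // ltW.
have err : 8 * n%:R * gam / 2 ^+ (q * n) <= T / 2.
  have -> : 8 * n%:R * gam / 2 ^+ (q * n)
      = c1 / 2 * (16 * C' / c1 * n%:R `^ (1 + delta) * lambda ^+ n / 2 ^+ (q * n)).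
    rewrite /gam powRD ?(lt0r_neq0 n0') ?implybT // powRr1 ?ler0n //.
    by field; rewrite expf_neq0 ?lt0r_neq0.
  rewrite T_half ler_wpM2l ?divr_ge0 ?(ltW c10) //.
  exact: le_trans (dom n n0) (powRN_le_log2_ratio _ _ m2).
have nqn : (n * (q * n) = m)%N by rewrite /m mulnCA mulnn.
have := lip_width_ge_of_entropy (p := q * n) bK gam0 n0 T0 _ err.
rewrite nqn => /(_ (entropy_gt m m2)); apply: le_trans; rewrite T_half.
apply: le_trans (ler_wpM2l _ (log2_ratio_scaled alpha beta q0 n2)); last first.
  by rewrite divr_ge0 // ltW.
by rewrite !mulrA.
Qed.

Theorem theorem7p3 (R : realType) (X : completeNormedModType R) (K : set X)
  (delta lambda C' : R) :
  compact K -> 1 < lambda -> 0 < C' ->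
  let gamma := fun n : nat => C' * (n%:R `^ delta) * lambda ^+ n in
  (forall c1 alpha beta : R, 0 < c1 -> 0 < alpha ->
     (forall n : nat, (2 <= n)%N ->
        entropy_number K n > c1 * (log2 n%:R `^ beta) / (n%:R `^ alpha)) ->
     exists2 C : R, 0 < C &
       forall n : nat, (2 <= n)%N ->
         lip_width K (gamma n) n >= C * (log2 n%:R `^ beta) / (n%:R `^ (2 * alpha)))
  /\
  (forall c1 alpha : R, 0 < c1 -> 0 < alpha ->
     (forall n : nat, (2 <= n)%N ->
        entropy_number K n > c1 * (log2 n%:R `^ (- alpha))) ->
     exists2 C : R, 0 < C &
       forall n : nat, (2 <= n)%N ->
         lip_width K (gamma n) n >= C * (log2 n%:R `^ (- alpha))).
Proof.
move=> cK lambda1 C'0 gamma; have bK := compact_bounded cK; split.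
  by move=> c1 alpha beta c10 alpha0; apply: lip_width_lower_bound => //; exact: ltW.
move=> c1 alpha c10 alpha0 entropy_gt.
have [|C C0 lower] := lip_width_lower_bound (beta := - alpha) delta bK lambda1 C'0 c10 (lexx 0).
  by move=> n n2; rewrite powRr0 divr1; exact: entropy_gt.
by exists C => // n n2; move: (lower n n2); rewrite mulr0 powRr0 divr1.
Qed.
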